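(* Let $(\mathcal{A},\tau,\tau',t)$ be a real infinitesimal probability space in which both $\tau$ and $\tau'$ are tracial, i.e. $\tau(ab)=\tau(ba)$ and $\tau'(ab)=\tau'(ba)$ for all $a,b\in\mathcal{A}$. Let $\mathcal{A}_1,\dots,\mathcal{A}_s\subseteq\mathcal{A}$ be unital symmetric subalgebras which are free with respect to $\tau$. Then $\mathcal{A}_1,\dots,\mathcal{A}_s$ are real infinitesimally free if and only if, for every $n\ge 1$ and all centred, cyclically alternating $a_1,\dots,a_n\in\mathcal{A}_1\cup\dots\cup\mathcal{A}_s$, the following hold: (i) if $n=2$ or $n$ is odd, then $\tau'(a_1\cdots a_n)=0$; (ii) if $n=2k\ge 4$ is even, then $\tau'(a_1\cdots a_n)=\tau(a_1a_{k+1}^t)\,\tau(a_2a_{k+2}^t)\cdots\tau(a_ka_n^t)$.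
   Context: A real infinitesimal probability space $(\mathcal{A},\tau,\tau',t)$ consists of a unital complex algebra $\mathcal{A}$, an involution $t$ written $a\mapsto a^t$ (linear, with $(ab)^t=b^ta^t$ and $(a^t)^t=a$), a linear functional $\tau:\mathcal{A}\to\mathbb{C}$ with $\tau(1)=1$ and $\tau(a^t)=\tau(a)$ for all $a$, and a linear functional $\tau':\mathcal{A}\to\mathbb{C}$ with $\tau'(1)=0$. A subalgebra $\mathcal{B}$ is symmetric if $b^t\in\mathcal{B}$ whenever $b\in\mathcal{B}$. Elements $a_1,\dots,a_n$ with $a_i\in\mathcal{A}_{j_i}$ are centred if $\tau(a_i)=0$ for all $i$; they are alternating if $j_1\ne j_2,\dots,j_{n-1}\ne j_n$, and cyclically alternating if in addition $j_n\ne j_1$. Unital symmetric subalgebras $\mathcal{A}_1,\dots,\mathcal{A}_s$ are real infinitesimally free if, whenever $a_1,\dots,a_n$ with $a_i\in\mathcal{A}_{j_i}$ are centred and alternating, we have: (1) $\tau(a_1\cdots a_n)=0$; (2) if $n=2$, $\tau'(a_1a_2)=0$; (3) if $n=2k-1\ge 3$, $\tau'(a_1\cdots a_n)=\tau(a_1a_n)\tau'(a_2\cdots a_{n-1})+\tau(a_1a_k^ta_n)\tau(a_2a_{k+1}^t)\cdots\tau(a_{k-1}a_{n-1}^t)$; (4) if $n=2k\ge4$, $\tau'(a_1\cdots a_n)=\tau(a_1a_n)\tau'(a_2\cdots a_{n-1})+\tau(a_1a_{k+1}^t)\tau(a_2a_{k+2}^t)\cdots\tau(a_ka_n^t)$.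 *)

(* Complex numbers are modelled as R[i] (mathcomp-real-closed
   `complex`) for an arbitrary realType R (any realType is the real line). *)
From mathcomp Require Import all_boot all_algebra.
From mathcomp Require Export complex.
From mathcomp Require Export reals.
Set Implicit Arguments.
Unset Strict Implicit.
Unset Printing Implicit Defensive.
Import GRing.Theory.
Local Open Scope ring_scope.

Section Defs.
Variable (R : realType).
Local Notation C := (R[i]).
Variable (A : algType C).

Definition is_transpose (t : A -> A) : Prop :=
  [/\ (forall (c : C) (a b : A), t (c *: a + b) = c *: t a + t b),
      (forall a b : A, t (a * b) = t b * t a) &
      (forall a : A, t (t a) = a)].

Definition is_lin_functional (f : A -> C) : Prop :=
  forall (c : C) (a b : A), f (c *: a + b) = c * f a + f b.

Definition real_inf_prob_space (tau tau' : A -> C) (t : A -> A) : Prop :=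
  [/\ is_transpose t, is_lin_functional tau, is_lin_functional tau' &
      [/\ tau 1 = 1, (forall a, tau (t a) = tau a) & tau' 1 = 0]].

Definition tracial (f : A -> C) : Prop := forall a b : A, f (a * b) = f (b * a).

Definition unital_subalgebra (B : pred A) : Prop :=
  [/\ 1 \in B,
      (forall (c : C) x y, x \in B -> y \in B -> c *: x + y \in B) &
      (forall x y, x \in B -> y \in B -> x * y \in B)].

Definition symmetric_subalgebra (t : A -> A) (B : pred A) : Prop :=
  forall b, b \in B -> t b \in B.

(* Sequences a_1..a_n are encoded 0-based: a : nat -> A, a i for i < n,
   with colouring j : nat -> 'I_s giving a i \in Asub (j i). *)
Definition in_subalgs (s : nat) (Asub : 'I_s -> pred A) (n : nat)
  (a : nat -> A) (j : nat -> 'I_s) : Prop :=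
  forall i, (i < n)%N -> a i \in Asub (j i).

Definition centred (tau : A -> C) (n : nat) (a : nat -> A) : Prop :=
  forall i, (i < n)%N -> tau (a i) = 0.

Definition alternating (s : nat) (n : nat) (j : nat -> 'I_s) : Prop :=
  forall i, (i.+1 < n)%N -> j i != j i.+1.

Definition cyc_alternating (s : nat) (n : nat) (j : nat -> 'I_s) : Prop :=
  alternating n j /\ ((0 < n)%N -> j n.-1 != j 0%N).

(* a_1 a_2 ... a_n (0-based: a 0 * ... * a (n-1)) *)
Definition word (n : nat) (a : nat -> A) : A := \prod_(0 <= i < n) a i.

(* a_2 ... a_{n-1} (0-based: a 1 * ... * a (n-2)) *)
Definition inner_word (n : nat) (a : nat -> A) : A :=
  \prod_(1 <= i < n.-1) a i.

Definition free_wrt (tau : A -> C) (s : nat) (Asub : 'I_s -> pred A) : Prop :=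
  forall (n : nat) (a : nat -> A) (j : nat -> 'I_s),
    (1 <= n)%N -> in_subalgs Asub n a j -> centred tau n a -> alternating n j ->
    tau (word n a) = 0.

Definition real_inf_free (tau tau' : A -> C) (t : A -> A)
    (s : nat) (Asub : 'I_s -> pred A) : Prop :=
  forall (n : nat) (a : nat -> A) (j : nat -> 'I_s),
    (1 <= n)%N -> in_subalgs Asub n a j -> centred tau n a -> alternating n j ->
    [/\ tau (word n a) = 0,
        (n = 2%N -> tau' (word n a) = 0),
        (forall k, n = (2 * k - 1)%N -> (3 <= n)%N ->
           tau' (word n a) =
             tau (a 0%N * a n.-1) * tau' (inner_word n a)
             + tau (a 0%N * t (a k.-1) * a n.-1)
               * \prod_(1 <= i < k.-1) tau (a i * t (a (i + k.-1)%N))) &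
        (forall k, n = (2 * k)%N -> (4 <= n)%N ->
           tau' (word n a) =
             tau (a 0%N * a n.-1) * tau' (inner_word n a)
             + \prod_(0 <= i < k) tau (a i * t (a (i + k)%N)))].

End Defs.

(* For a cyclically alternating word, the extra terms in the definition of real
   infinitesimal freeness are [tau (a_1 a_n)] and [tau (a_1 a_k^t a_n)], moments
   of centred elements of different algebras, so freeness for [tau] kills them.
   Conversely, if an alternating word has [a_1] and [a_n] in the same algebra,
   traciality of [tau'] moves [a_n] to the front, and splitting
   [a_n a_1 = (a_n a_1 - tau (a_n a_1)) + tau (a_1 a_n)] produces the term
   [tau (a_1 a_n) tau' (a_2 ... a_(n-1))] plus [tau'] of a cyclically
   alternating word of length [n - 1], whose cyclic value is the other term. *)
From mathcomp Require Import all_boot all_algebra.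
From mathcomp Require Import complex reals.
From mathcomp Require Import zify.
Import GRing.Theory.
Set Implicit Arguments.
Unset Strict Implicit.
Local Open Scope ring_scope.

Section LinearFunctional.
Variables (R : realType) (A : algType R[i]) (f : A -> R[i]).
Hypothesis f_lin : is_lin_functional f.

Lemma lin_functional0 : f 0 = 0.
Proof.
have := f_lin 1 0 0; rewrite scale1r addr0 mul1r => f00.
by apply: (addrI (f 0)); rewrite addr0 -f00.
Qed.

Lemma lin_functionalD x y : f (x + y) = f x + f y.
Proof. by rewrite -(scale1r x) f_lin mul1r scale1r. Qed.

Lemma lin_functionalZ c x : f (c *: x) = c * f x.
Proof. by rewrite -(addr0 (c *: x)) f_lin lin_functional0 addr0. Qed.

Lemma lin_functionalB x y : f (x - y) = f x - f y.
Proof. by rewrite -scaleN1r lin_functionalD lin_functionalZ mulN1r. Qed.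

End LinearFunctional.

Lemma word_split (R : realType) (A : algType R[i]) (n : nat) (a : nat -> A) :
  (2 <= n)%N -> word n a = a 0%N * inner_word n a * a n.-1.
Proof.
case: n => [|[|n]] // _.
by rewrite /word /inner_word big_ltn // big_nat_recr //= mulrA.
Qed.

Lemma odd_double_sub1 k : (0 < k)%N -> odd (2 * k - 1).
Proof.
by case: k => // k _; rewrite (_ : 2 * k.+1 - 1 = (2 * k).+1)%N ?oddM //; lia.
Qed.

Section CyclicCharacterisation.
Variables (R : realType) (A : algType R[i]).
Variables (tau tau' : A -> R[i]) (t : A -> A) (s : nat) (Asub : 'I_s -> pred A).
Hypotheses (tau_lin : is_lin_functional tau) (tau'_lin : is_lin_functional tau').
Hypotheses (tau1 : tau 1 = 1) (tau_t : forall a, tau (t a) = tau a).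
Hypotheses (tau_tr : tracial tau) (tau'_tr : tracial tau').
Hypothesis Asub_alg : forall l, unital_subalgebra (Asub l).
Hypothesis Asub_sym : forall l, symmetric_subalgebra t (Asub l).
Hypothesis Asub_free : free_wrt tau Asub.

Definition centre (x : A) : A := x - tau x *: 1.

Lemma tau_centre x : tau (centre x) = 0.
Proof. by rewrite lin_functionalB // lin_functionalZ // tau1 mulr1 subrr. Qed.

Lemma centreMl x y : centre x * y = x * y - tau x *: y.
Proof. by rewrite mulrBl -scalerAl mul1r. Qed.

Lemma centre_in l x : x \in Asub l -> centre x \in Asub l.
Proof.
case: (Asub_alg l) => Asub1 Asub_lin _ Asub_x.
by rewrite /centre addrC -scaleNr Asub_lin.
Qed.

Lemma Asub_mul l x y : x \in Asub l -> y \in Asub l -> x * y \in Asub l.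
Proof. by case: (Asub_alg l) => _ _; apply. Qed.

Lemma tau_free_mul_eq0 p q x y : p != q -> x \in Asub p -> y \in Asub q ->
  tau x = 0 -> tau y = 0 -> tau (x * y) = 0.
Proof.
move=> pq Ax Ay tx ty.
have := @Asub_free 2 (fun i => if i == 0%N then x else y)
                  (fun i => if i == 0%N then p else q) (isT : (1 <= 2)%N).
rewrite /word big_ltn // big_ltn // big_geq // mulr1 /=.
by apply; case=> [|[|]].
Qed.

Lemma tau_free_mul_eq0r p q x y : p != q -> x \in Asub p -> y \in Asub q ->
  tau y = 0 -> tau (x * y) = 0.
Proof.
move=> pq Ax Ay ty.
have -> : x * y = centre x * y + tau x *: y by rewrite centreMl subrK.
rewrite lin_functionalD // lin_functionalZ // ty mulr0 addr0.
exact: (tau_free_mul_eq0 pq (centre_in Ax) Ay (tau_centre x) ty).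
Qed.

Lemma tau_free_mul_eq0l p q x y : p != q -> x \in Asub p -> y \in Asub q ->
  tau x = 0 -> tau (x * y) = 0.
Proof.
by move=> pq Ax Ay tx; rewrite tau_tr (tau_free_mul_eq0r _ Ay Ax) // eq_sym.
Qed.

Lemma tau_free_mul3_eq0 p q r x y z : p != r ->
  x \in Asub p -> y \in Asub q -> z \in Asub r ->
  tau x = 0 -> tau y = 0 -> tau z = 0 -> tau (x * y * z) = 0.
Proof.
move=> pr Ax Ay Az tx ty tz.
have [qp|qp] := eqVneq q p.
  by rewrite qp in Ay; exact: (tau_free_mul_eq0r pr (Asub_mul Ax Ay)).
have [qr|qr] := eqVneq q r.
  by rewrite qr in Ay; rewrite -mulrA (tau_free_mul_eq0l pr Ax (Asub_mul Ay Az)).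
have := @Asub_free 3 (fun i => nth 0 [:: x; y; z] i) (fun i => nth p [:: p; q; r] i)
                  (isT : (1 <= 3)%N).
rewrite /word big_ltn // big_ltn // big_ltn // big_geq // mulr1 /= mulrA.
apply; try by case=> [|[|[|]]].
by case=> [|[|[|]]] //= _; rewrite ?qr // eq_sym.
Qed.

Section CyclicEnds.
Variables (n : nat) (a : nat -> A) (j : nat -> 'I_s).
Hypotheses (n_gt0 : (0 < n)%N) (a_in : in_subalgs Asub n a j) (a_cen : centred tau n a).
Hypothesis ends_neq : j n.-1 != j 0%N.

Lemma tau_cyc_ends_eq0 : tau (a 0%N * a n.-1) = 0.
Proof.
have n1_lt : (n.-1 < n)%N by lia.
apply: (tau_free_mul_eq0 _ (a_in n_gt0) (a_in n1_lt) (a_cen n_gt0) (a_cen n1_lt)).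
by rewrite eq_sym.
Qed.

Lemma tau_cyc_ends_t_eq0 m : (m < n)%N -> tau (a 0%N * t (a m) * a n.-1) = 0.
Proof.
move=> m_lt; have n1_lt : (n.-1 < n)%N by lia.
apply: (tau_free_mul3_eq0 _ (a_in n_gt0) (Asub_sym (a_in m_lt)) (a_in n1_lt)).
- by rewrite eq_sym.
- exact: a_cen.
- by rewrite tau_t a_cen.
- exact: a_cen.
Qed.

End CyclicEnds.

Definition cyc_inf_free : Prop :=
  forall (n : nat) (a : nat -> A) (j : nat -> 'I_s),
    (1 <= n)%N -> in_subalgs Asub n a j -> centred tau n a ->
    cyc_alternating n j ->
    ((n = 2%N \/ odd n) -> tau' (word n a) = 0) /\
    (forall k, n = (2 * k)%N -> (4 <= n)%N ->
       tau' (word n a) = \prod_(0 <= i < k) tau (a i * t (a (i + k)%N))).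

Lemma real_inf_free_cyc : real_inf_free tau tau' t Asub -> cyc_inf_free.
Proof.
move=> inf_free n a j n_gt0 a_in a_cen [alt ends_neq].
have {}ends_neq := ends_neq n_gt0.
have [_ tau'2 tau'_odd tau'_even] := inf_free n a j n_gt0 a_in a_cen alt.
have ends0 := tau_cyc_ends_eq0 n_gt0 a_in a_cen ends_neq.
split=> [[/tau'2 //|n_odd]|k n2k n_ge4]; last first.
  by rewrite (tau'_even k) // ends0 mul0r add0r.
have n_ne1 : n <> 1%N by move=> n1; move: ends_neq; rewrite n1 eqxx.
have n_eq : n = (n %/ 2 * 2 + 1)%N by rewrite {1}(divn_eq n 2) modn2 n_odd.
rewrite (tau'_odd (n %/ 2).+1); [|lia|lia].
rewrite ends0 (tau_cyc_ends_t_eq0 n_gt0 a_in a_cen ends_neq) ?mul0r ?addr0 //.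
lia.
Qed.

Section MergeEnds.
Variables (n : nat) (a : nat -> A) (j : nat -> 'I_s).
Hypothesis n_ge2 : (2 <= n)%N.

Definition merge_ends : nat -> A :=
  fun i => if i == 0%N then centre (a n.-1 * a 0%N) else a i.

Lemma word_merge_ends : word n.-1 merge_ends = centre (a n.-1 * a 0%N) * inner_word n a.
Proof.
rewrite /word /inner_word big_ltn; last by lia.
congr (_ * _); apply: eq_big_nat => i /andP [i_gt0 _].
by rewrite /merge_ends; case: eqP => // ?; lia.
Qed.

Lemma tau'_word_merge_ends : tau' (word n a) =
  tau' (word n.-1 merge_ends) + tau (a 0%N * a n.-1) * tau' (inner_word n a).
Proof.
rewrite word_split // tau'_tr mulrA word_merge_ends centreMl.
by rewrite lin_functionalB // lin_functionalZ // (tau_tr (a 0%N)) subrK.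
Qed.

Hypotheses (a_in : in_subalgs Asub n a j) (a_cen : centred tau n a).
Hypotheses (alt : alternating n j) (ends_eq : j n.-1 = j 0%N).

Lemma merge_ends_in : in_subalgs Asub n.-1 merge_ends j.
Proof.
move=> i i_lt; rewrite /merge_ends; case: eqP => [->|_]; last by apply: a_in; lia.
by apply/centre_in/Asub_mul; [rewrite -ends_eq|]; apply: a_in; lia.
Qed.

Lemma merge_ends_centred : centred tau n.-1 merge_ends.
Proof.
move=> i i_lt; rewrite /merge_ends; case: eqP => [_|_]; first exact: tau_centre.
by apply: a_cen; lia.
Qed.

Lemma merge_ends_cyc_alternating : cyc_alternating n.-1 j.
Proof.
split=> [i i_lt|_]; first by apply: alt; lia.
rewrite -ends_eq; have := @alt n.-2; have -> : n.-2.+1 = n.-1 by lia.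
by apply; lia.
Qed.

End MergeEnds.

Section FromCyclic.
Hypothesis cyc : cyc_inf_free.
Variables (n : nat) (a : nat -> A) (j : nat -> 'I_s).
Hypotheses (n_gt0 : (0 < n)%N) (a_in : in_subalgs Asub n a j).
Hypotheses (a_cen : centred tau n a) (alt : alternating n j).

Lemma cyc_merge_ends (ends_eq : j n.-1 = j 0%N) (n_ge3 : (3 <= n)%N) :
  ((n.-1 = 2%N \/ odd n.-1) -> tau' (word n.-1 (merge_ends n a)) = 0) /\
  (forall k, n.-1 = (2 * k)%N -> (4 <= n.-1)%N ->
     tau' (word n.-1 (merge_ends n a)) =
     \prod_(0 <= i < k) tau (merge_ends n a i * t (merge_ends n a (i + k)%N))).
Proof.
have n_ge2 : (2 <= n)%N by lia.
apply: (@cyc n.-1 (merge_ends n a) j); first lia.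
- exact: merge_ends_in.
- exact: merge_ends_centred.
- exact: merge_ends_cyc_alternating.
Qed.

Lemma cyc_inf_free_tau'2 : n = 2%N -> tau' (word n a) = 0.
Proof.
move=> n2.
have cyc_alt : cyc_alternating n j.
  split=> [i|_]; first exact: alt.
  by rewrite n2 eq_sym; apply: (@alt 0%N); rewrite n2.
have [tau'2 _] := cyc n_gt0 a_in a_cen cyc_alt.
by apply: tau'2; left.
Qed.

Lemma cyc_inf_free_tau'_odd k : n = (2 * k - 1)%N -> (3 <= n)%N ->
  tau' (word n a) =
    tau (a 0%N * a n.-1) * tau' (inner_word n a)
    + tau (a 0%N * t (a k.-1) * a n.-1)
      * \prod_(1 <= i < k.-1) tau (a i * t (a (i + k.-1)%N)).
Proof.
move=> n_eq n_ge3.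
have [ends_eq|ends_neq] := eqVneq (j n.-1) (j 0%N); last first.
  have [tau'_odd _] := cyc n_gt0 a_in a_cen (conj alt (fun _ => ends_neq)).
  rewrite tau'_odd; last by right; rewrite n_eq odd_double_sub1 //; lia.
  rewrite (tau_cyc_ends_eq0 n_gt0 a_in a_cen ends_neq).
  by rewrite (tau_cyc_ends_t_eq0 n_gt0 a_in a_cen ends_neq) ?mul0r ?addr0 //; lia.
rewrite tau'_word_merge_ends; last lia.
have [tau'_2 tau'_even] := cyc_merge_ends ends_eq n_ge3.
rewrite addrC; congr (_ + _).
have [k2|k_ge3] : k = 2%N \/ (3 <= k)%N by lia.
  rewrite tau'_2; last by left; lia.
  rewrite k2 big_geq // mulr1 /= tau_tr mulrA.
  apply/esym/(tau_free_mul_eq0r (p := j 0%N) (q := j 1%N)).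
  - by apply: (@alt 0%N); lia.
  - by apply: Asub_mul; [rewrite -ends_eq|]; apply: a_in; lia.
  - by apply: Asub_sym; apply: a_in; lia.
  - by rewrite tau_t; apply: a_cen; lia.
rewrite (tau'_even k.-1); [|lia|lia].
rewrite big_ltn; last lia.
congr (_ * _).
  rewrite /merge_ends /= add0n; case: eqP => [?|_]; first lia.
  rewrite centreMl lin_functionalB // lin_functionalZ // tau_t a_cen; last lia.
  by rewrite mulr0 subr0 [RHS]tau_tr mulrA.
apply: eq_big_nat => i /andP [i_gt0 _].
by rewrite /merge_ends; case: eqP => [?|_]; [lia|case: eqP => [?|_] //; lia].
Qed.

Lemma cyc_inf_free_tau'_even k : n = (2 * k)%N -> (4 <= n)%N ->
  tau' (word n a) =
    tau (a 0%N * a n.-1) * tau' (inner_word n a)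
    + \prod_(0 <= i < k) tau (a i * t (a (i + k)%N)).
Proof.
move=> n_eq n_ge4.
have [ends_eq|ends_neq] := eqVneq (j n.-1) (j 0%N); last first.
  have [_ tau'_even] := cyc n_gt0 a_in a_cen (conj alt (fun _ => ends_neq)).
  rewrite (tau'_even k) // (tau_cyc_ends_eq0 n_gt0 a_in a_cen ends_neq).
  by rewrite mul0r add0r.
rewrite tau'_word_merge_ends; last lia.
have [tau'_odd _] := cyc_merge_ends ends_eq ltac:(lia).
rewrite tau'_odd; last first.
  by right; rewrite (_ : n.-1 = 2 * k - 1)%N ?odd_double_sub1 //; lia.
(* If [a_1] and [a_(k+1)] lie in the same algebra, then [a_k] and
   [a_n = a_(2k)] do not, since [j_n = j_1 = j_(k+1) <> j_k]. *)
have [i0 i0_lt j_neq] : exists2 i, (i < k)%N & j i != j (i + k)%N.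
  have [j0k|] := eqVneq (j 0%N) (j k); last by exists 0%N => //; lia.
  exists k.-1; first lia.
  have -> : (k.-1 + k = n.-1)%N by lia.
  rewrite ends_eq j0k; have := @alt k.-1; have -> : k.-1.+1 = k by lia.
  by apply; lia.
have -> : \prod_(0 <= i < k) tau (a i * t (a (i + k)%N)) = 0.
  apply/eqP; rewrite prodf_seq_eq0; apply/hasP; exists i0.
    by rewrite mem_index_iota; lia.
  apply/eqP/(tau_free_mul_eq0 j_neq).
  - by apply: a_in; lia.
  - by apply: Asub_sym; apply: a_in; lia.
  - by apply: a_cen; lia.
  - by rewrite tau_t; apply: a_cen; lia.
by rewrite add0r addr0.
Qed.

End FromCyclic.

Lemma cyc_real_inf_free : cyc_inf_free -> real_inf_free tau tau' t Asub.
Proof.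
move=> cyc n a j n_gt0 a_in a_cen alt; split.
- exact: Asub_free n_gt0 a_in a_cen alt.
- by move=> n2; rewrite (cyc_inf_free_tau'2 cyc n_gt0 a_in a_cen alt n2).
- move=> k n_eq n_ge3.
  by rewrite (cyc_inf_free_tau'_odd cyc n_gt0 a_in a_cen alt n_eq n_ge3).
- move=> k n_eq n_ge4.
  by rewrite (cyc_inf_free_tau'_even cyc n_gt0 a_in a_cen alt n_eq n_ge4).
Qed.

End CyclicCharacterisation.

Theorem proposition3p4 (R : realType) (A : algType R[i])
    (tau tau' : A -> R[i]) (t : A -> A)
    (s : nat) (Asub : 'I_s -> pred A) :
  real_inf_prob_space tau tau' t ->
  tracial tau -> tracial tau' ->
  (forall l, unital_subalgebra (Asub l)) ->
  (forall l, symmetric_subalgebra t (Asub l)) ->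
  free_wrt tau Asub ->
  real_inf_free tau tau' t Asub <->
  (forall (n : nat) (a : nat -> A) (j : nat -> 'I_s),
     (1 <= n)%N -> in_subalgs Asub n a j -> centred tau n a ->
     cyc_alternating n j ->
     ((n = 2%N \/ odd n) -> tau' (word n a) = 0) /\
     (forall k, n = (2 * k)%N -> (4 <= n)%N ->
        tau' (word n a) = \prod_(0 <= i < k) tau (a i * t (a (i + k)%N)))).
Proof.
move=> [_ tau_lin tau'_lin [tau1 tau_t _]] tau_tr tau'_tr Asub_alg Asub_sym Asub_free.
split; first exact: real_inf_free_cyc.
exact: cyc_real_inf_free.
Qed.
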